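(* Let $m\ge4$ and let $(c_1,\dots,c_m)\in\mathbb{C}^m$ be a quiddity cycle with at least one nonzero entry, with associated tame frieze pattern entries $a_{i,j}$. Then there exists a triangulation of the convex $m$-gon with vertices $1,\dots,m$ such that $a_{i,j}\ne0$ for every diagonal $(i,j)$ of the triangulation (i.e. the frieze pattern has a cluster without zero entry).
   Context: $\eta(c)=\begin{pmatrix}c&-1\\1&0\end{pmatrix}$. A quiddity cycle is $(c_1,\dots,c_m)$ with $\eta(c_1)\cdots\eta(c_m)=-I$. The associated tame frieze pattern is built as follows: - extend $(c_k)$ $m$-periodically; - set $M_{i,j}=\eta(c_i)\cdots\eta(c_j)$ for $i-1\le j$, the empty product being $I$; - its entries are $a_{i,j+2}=(M_{i,j})_{1,1}$ for $i-1\le j\le i+m-3$. A diagonal of the $m$-gon with vertices $1,\dots,m$ (in cyclic order) is a pair $(i,j)$ with $1\le i<j\le m$, $j-i\ge2$, $(i,j)\ne(1,m)$. A triangulation (cluster) is a maximal set of pairwise non-crossing diagonals; the corresponding entries $a_{i,j}$ form a cluster of the frieze pattern. *)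

From Stdlib Require Import Reals List Arith.
Open Scope R_scope.

Record Cplx : Type := mkC { Re : R ; Im : R }.
Definition C0 : Cplx := mkC 0 0.
Definition C1 : Cplx := mkC 1 0.
Definition Cadd (x y : Cplx) : Cplx := mkC (Re x + Re y) (Im x + Im y).
Definition Copp (x : Cplx) : Cplx := mkC (- Re x) (- Im x).
Definition Cmul (x y : Cplx) : Cplx :=
  mkC (Re x * Re y - Im x * Im y) (Re x * Im y + Im x * Re y).

Record M2 : Type := mkM2 { m11 : Cplx ; m12 : Cplx ; m21 : Cplx ; m22 : Cplx }.
Definition M2mul (A B : M2) : M2 :=
  mkM2 (Cadd (Cmul (m11 A) (m11 B)) (Cmul (m12 A) (m21 B)))
       (Cadd (Cmul (m11 A) (m12 B)) (Cmul (m12 A) (m22 B)))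
       (Cadd (Cmul (m21 A) (m11 B)) (Cmul (m22 A) (m21 B)))
       (Cadd (Cmul (m21 A) (m12 B)) (Cmul (m22 A) (m22 B))).
Definition M2id : M2 := mkM2 C1 C0 C0 C1.
Definition M2negid : M2 := mkM2 (Copp C1) C0 C0 (Copp C1).

Definition eta (c : Cplx) : M2 := mkM2 c (Copp C1) C1 C0.

Close Scope R_scope.

(** A sequence (c_1,...,c_m) is given as a list [cs] of length m;
    [cper cs k] is the m-periodic extension, c_k = nth ((k-1) mod m). *)
Definition cper (cs : list Cplx) (k : nat) : Cplx :=
  nth ((k - 1) mod (length cs)) cs C0.

Fixpoint Mprod (cs : list Cplx) (i n : nat) : M2 :=
  match n with
  | O => M2id
  | S n' => M2mul (eta (cper cs i)) (Mprod cs (S i) n')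
  end.

Definition quiddity_cycle (cs : list Cplx) : Prop :=
  Mprod cs 1 (length cs) = M2negid.

(** M_{i,j} = eta(c_i)...eta(c_j) has j - i + 1 factors, and
    a_{i,j+2} = (M_{i,j})_{1,1}; hence for i < j,
    a_{i,j} = (M_{i,j-2})_{1,1}, a product of j - i - 1 factors. *)
Definition frieze_entry (cs : list Cplx) (i j : nat) : Cplx :=
  m11 (Mprod cs i (j - i - 1)).

Definition diagonal (m i j : nat) : Prop :=
  1 <= i /\ i < j /\ j <= m /\ 2 <= j - i /\ ~ (i = 1 /\ j = m).

Definition crossing (i j k l : nat) : Prop :=
  (i < k < j /\ j < l) \/ (k < i < l /\ l < j).

Definition triangulation (m : nat) (T : nat -> nat -> Prop) : Prop :=
  (forall i j, T i j -> diagonal m i j) /\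
  (forall i j k l, T i j -> T k l -> ~ crossing i j k l) /\
  (forall i j, diagonal m i j ->
     (forall k l, T k l -> ~ crossing i j k l) -> T i j).

(* With W_k := -(second column of eta(c_1)...eta(c_k)), every entry of the frieze is
   a determinant a_{i,j} = det(W_{i-1}, W_{j-1}); consecutive vectors satisfy
   det(W_k, W_{k+1}) = 1, and the quiddity relation gives W_{k+m} = -W_k.  Hence no
   W_k vanishes, and colouring the vertex a by the line through W_{a-1} is a proper
   colouring of the m-gon in which a_{i,j} <> 0 exactly when i and j get different
   colours.  Since c_{k+1} = det(W_k, W_{k+2}), a nonzero entry c_{k+1} yields a vertex
   whose two neighbours have different colours (an ear).  Cutting off an ear along the
   bichromatic chord joining its neighbours, choosing the ear so that the smaller
   polygon still has one, and inducting gives a triangulation all of whose diagonals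
   are bichromatic. *)

From Pilot Require Import Defs.
From Stdlib Require Import Reals List Arith.
From Stdlib Require Import Lia Lra Classical.
Import ListNotations.

(** * Frieze entries as determinants *)

Definition Csub (x y : Cplx) : Cplx := Cadd x (Copp y).

Lemma Cplx_ring : ring_theory C0 Defs.C1 Cadd Cmul Csub Copp (@eq Cplx).
Proof.
  constructor; intros; repeat match goal with x : Cplx |- _ => destruct x end;
  unfold Csub, Cadd, Cmul, Copp, C0, Defs.C1; simpl; f_equal; ring.
Qed.
Add Ring Cplx_ring : Cplx_ring.

Lemma C1_neq_C0 : Defs.C1 <> C0.
Proof. intro H; injection H; exact R1_neq_R0. Qed.

Lemma Cmul_integral a b : Cmul a b = C0 -> a = C0 \/ b = C0.
Proof.
  intro H; destruct (classic (b = C0)) as [|Hb]; [now right|left].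
  destruct a as [a1 a2], b as [b1 b2]; unfold Cmul, C0 in *; simpl in *.
  injection H; intros Him Hre.
  assert (Hn : (b1 * b1 + b2 * b2 <> 0)%R).
  { intro Hn; apply Hb; f_equal; nra. }
  (* Multiply a * b by the conjugate of b. *)
  assert (a1 * (b1 * b1 + b2 * b2) = 0 /\ a2 * (b1 * b1 + b2 * b2) = 0)%R as [E1 E2].
  { split.
    - replace (a1 * _)%R with (b1 * (a1 * b1 - a2 * b2) + b2 * (a1 * b2 + a2 * b1))%R by ring.
      rewrite Hre, Him; ring.
    - replace (a2 * _)%R with (b1 * (a1 * b2 + a2 * b1) - b2 * (a1 * b1 - a2 * b2))%R by ring.
      rewrite Hre, Him; ring. }
  apply Rmult_integral in E1, E2; f_equal; tauto.
Qed.

Lemma M2mul_assoc A B C : M2mul A (M2mul B C) = M2mul (M2mul A B) C.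
Proof. destruct A, B, C; unfold M2mul; simpl; f_equal; ring. Qed.

Lemma M2mul_1l A : M2mul M2id A = A.
Proof. destruct A; unfold M2mul, M2id; simpl; f_equal; ring. Qed.

Definition M2det (A : M2) : Cplx := Csub (Cmul (m11 A) (m22 A)) (Cmul (m12 A) (m21 A)).

Lemma M2det_mul A B : M2det (M2mul A B) = Cmul (M2det A) (M2det B).
Proof. destruct A, B; unfold M2det, M2mul; simpl; ring. Qed.

Lemma Mprod_add cs i a b : Mprod cs i (a + b) = M2mul (Mprod cs i a) (Mprod cs (i + a) b).
Proof.
  revert i; induction a as [|a IH]; intro i; simpl.
  - now rewrite M2mul_1l, Nat.add_0_r.
  - rewrite IH, M2mul_assoc, Nat.add_succ_r; reflexivity.
Qed.

Lemma M2det_Mprod cs i n : M2det (Mprod cs i n) = Defs.C1.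
Proof.
  revert i; induction n as [|n IH]; intro i; simpl.
  - unfold M2det, M2id; simpl; ring.
  - rewrite M2det_mul, IH; unfold M2det, eta; simpl; ring.
Qed.

Lemma cper_periodic cs i : 1 <= i -> cper cs (length cs + i) = cper cs i.
Proof.
  intro Hi; unfold cper.
  replace (length cs + i - 1) with (i - 1 + 1 * length cs) by lia.
  now rewrite Nat.Div0.mod_add.
Qed.

Lemma Mprod_periodic cs i n : 1 <= i -> Mprod cs (length cs + i) n = Mprod cs i n.
Proof.
  revert i; induction n as [|n IH]; intros i Hi; simpl; [reflexivity|].
  rewrite cper_periodic, <- Nat.add_succ_r, IH by lia; reflexivity.
Qed.

Definition cdet (p q : Cplx * Cplx) : Cplx :=
  Csub (Cmul (fst p) (snd q)) (Cmul (snd p) (fst q)).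

Lemma Copp_eq0 a : Copp a = C0 <-> a = C0.
Proof.
  split; intro H; [transitivity (Copp (Copp a)); [ring | rewrite H] | rewrite H]; ring.
Qed.

Lemma cdet_oppl p q : cdet (Copp (fst p), Copp (snd p)) q = Copp (cdet p q).
Proof. unfold cdet; simpl; ring. Qed.

Lemma cdet_eq0_comm p q : cdet p q = C0 <-> cdet q p = C0.
Proof.
  replace (cdet p q) with (Copp (cdet q p)) by (unfold cdet; ring).
  apply Copp_eq0.
Qed.

Lemma cdet_eq0_trans p q r : fst q <> C0 \/ snd q <> C0 ->
  cdet p q = C0 -> cdet q r = C0 -> cdet p r = C0.
Proof.
  intros Hq Hpq Hqr.
  assert (E : Cmul (cdet p r) (fst q) = C0 /\ Cmul (cdet p r) (snd q) = C0).
  { split; [ transitivity (Cadd (Cmul (cdet q r) (fst p)) (Cmul (cdet p q) (fst r)))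
           | transitivity (Cadd (Cmul (cdet q r) (snd p)) (Cmul (cdet p q) (snd r))) ];
    solve [unfold cdet; ring | rewrite Hpq, Hqr; ring]. }
  destruct E as [E1 E2]; apply Cmul_integral in E1, E2; tauto.
Qed.

Definition wvec (cs : list Cplx) (k : nat) : Cplx * Cplx :=
  (Copp (m12 (Mprod cs 1 k)), Copp (m22 (Mprod cs 1 k))).

Lemma m11_Mprod_cdet cs i n : 1 <= i ->
  m11 (Mprod cs i n) = cdet (wvec cs (i - 1)) (wvec cs (i + n)).
Proof.
  intro Hi; unfold wvec.
  replace (i + n) with (i - 1 + (n + 1)) by lia.
  rewrite (Mprod_add cs 1 (i - 1) (n + 1)).
  replace (1 + (i - 1)) with i by lia.
  rewrite (Mprod_add cs i n 1).
  pose proof (M2det_Mprod cs 1 (i - 1)) as HP.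
  destruct (Mprod cs 1 (i - 1)) as [p11 p12 p21 p22], (Mprod cs i n) as [x11 x12 x21 x22].
  unfold M2det in HP; simpl in HP; unfold cdet, M2mul, eta, M2id; simpl.
  transitivity (Cmul (Csub (Cmul p11 p22) (Cmul p12 p21)) x11); [rewrite HP | ]; ring.
Qed.

Lemma frieze_entry_cdet cs i j : 1 <= i < j ->
  frieze_entry cs i j = cdet (wvec cs (i - 1)) (wvec cs (j - 1)).
Proof.
  intro Hij; unfold frieze_entry; rewrite m11_Mprod_cdet by lia.
  do 2 f_equal; lia.
Qed.

Lemma cdet_wvec_succ cs k : cdet (wvec cs k) (wvec cs (S k)) = Defs.C1.
Proof.
  pose proof (m11_Mprod_cdet cs (S k) 0) as H.
  rewrite Nat.add_0_r, Nat.sub_succ, Nat.sub_0_r in H.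
  rewrite <- H; [reflexivity | lia].
Qed.

Lemma wvec_neq0 cs k : fst (wvec cs k) <> C0 \/ snd (wvec cs k) <> C0.
Proof.
  apply NNPP; intro H.
  assert (fst (wvec cs k) = C0 /\ snd (wvec cs k) = C0) as [E1 E2]
    by (split; apply NNPP; tauto).
  apply C1_neq_C0; rewrite <- (cdet_wvec_succ cs k); unfold cdet; rewrite E1, E2; ring.
Qed.

Lemma wvec_antiperiodic cs k : quiddity_cycle cs ->
  wvec cs (length cs + k) = (Copp (fst (wvec cs k)), Copp (snd (wvec cs k))).
Proof.
  intro Hq; unfold wvec; rewrite Mprod_add, Hq, Nat.add_comm, Mprod_periodic by lia.
  destruct (Mprod cs 1 k); unfold M2mul, M2negid; simpl; f_equal; ring.
Qed.

Lemma wvec_collinear_mod cs k p : quiddity_cycle cs ->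
  cdet (wvec cs k) p = C0 <-> cdet (wvec cs (k mod length cs)) p = C0.
Proof.
  intro Hq; rewrite (Nat.div_mod_eq k (length cs)) at 1.
  induction (k / length cs) as [|q IH]; [now rewrite Nat.mul_0_r|].
  replace (length cs * S q + k mod length cs)
    with (length cs + (length cs * q + k mod length cs)) by lia.
  now rewrite wvec_antiperiodic, cdet_oppl, Copp_eq0.
Qed.

Definition collinear (cs : list Cplx) (a b : nat) : Prop :=
  cdet (wvec cs (a - 1)) (wvec cs (b - 1)) = C0.

Lemma collinear_refl cs a : collinear cs a a.
Proof. unfold collinear, cdet; ring. Qed.

Lemma collinear_sym cs a b : collinear cs a b -> collinear cs b a.
Proof. apply cdet_eq0_comm. Qed.

Lemma collinear_trans cs a b c : collinear cs a b -> collinear cs b c -> collinear cs a c.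
Proof. apply cdet_eq0_trans, wvec_neq0. Qed.

Definition vertex (m k : nat) : nat := S (k mod m).

Lemma collinear_vertex cs a b : quiddity_cycle cs ->
  collinear cs (vertex (length cs) a) (vertex (length cs) b) <->
  cdet (wvec cs a) (wvec cs b) = C0.
Proof.
  intro Hq; unfold collinear, vertex; rewrite !Nat.sub_1_r, !Nat.pred_succ.
  rewrite <- (wvec_collinear_mod cs a), cdet_eq0_comm, <- (wvec_collinear_mod cs b) by exact Hq.
  apply cdet_eq0_comm.
Qed.

(** * Bichromatic triangulations of coloured polygons *)

Notation cut x l := (remove Nat.eq_dec x l).

(* For [a < b], [side l a b]: [a] and [b] are consecutive in the cyclic order of
   [l], either with no vertex strictly between them or as its minimum and maximum. *)
Definition side (l : list nat) (a b : nat) : Prop :=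
  (forall z, In z l -> ~ a < z < b) \/ (forall z, In z l -> a <= z <= b).

Definition adjacent (l : list nat) (a b : nat) : Prop :=
  (a < b /\ side l a b) \/ (b < a /\ side l b a).

Definition neighbour (l : list nat) (x y : nat) : Prop := In y l /\ adjacent l x y.

Definition chord (l : list nat) (a b : nat) : Prop :=
  a < b /\ In a l /\ In b l /\ ~ side l a b.

Definition triangulates (l : list nat) (T : nat -> nat -> Prop) : Prop :=
  (forall a b, T a b -> chord l a b) /\
  (forall a b c d, T a b -> T c d -> ~ crossing a b c d) /\
  (forall a b, chord l a b -> (forall c d, T c d -> ~ crossing a b c d) -> T a b).

Ltac instantiate_members :=
  repeat match goal with
  | H : forall z, In z ?l -> _, Hz : In ?w ?l |- _ =>
      let P := type of (H w Hz) in
      lazymatch goal with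
      | _ : P |- _ => fail
      | _ => pose proof (H w Hz)
      end
  end.

Ltac polygon_lia :=
  unfold neighbour, adjacent, side, crossing in *;
  repeat match goal with
  | H : _ /\ _ |- _ => destruct H
  | H : _ \/ _ |- _ => destruct H
  end;
  instantiate_members; lia.

Lemma neighbour_sym l x y : In x l -> neighbour l x y -> neighbour l y x.
Proof. unfold neighbour, adjacent; tauto. Qed.

Lemma neighbour_neq l x y : neighbour l x y -> x <> y.
Proof. polygon_lia. Qed.

Lemma neighbour_at_most_two l x a b c : In x l ->
  neighbour l x a -> neighbour l x b -> neighbour l x c -> a = b \/ a = c \/ b = c.
Proof. intros; polygon_lia. Qed.

Lemma triangle_length l x u v : NoDup l -> In x l ->
  neighbour l x u -> neighbour l x v -> u <> v -> adjacent l u v -> length l <= 3.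
Proof.
  intros Hl Hx Hu Hv Huv Hadj; change 3 with (length [x; u; v]).
  apply NoDup_incl_length; [exact Hl|]; intros z Hz; simpl.
  assert (z = x \/ z = u \/ z = v) by polygon_lia; lia.
Qed.

Lemma adjacent_side l a b : adjacent l a b -> a < b -> side l a b.
Proof. intros [[]|[]] ?; [auto | lia]. Qed.

Lemma side_incl l l' a b : incl l' l -> side l a b -> side l' a b.
Proof. unfold side, incl; intros Hi [H|H]; [left|right]; intros z Hz; apply H; auto. Qed.

Lemma side_noncrossing l a b c d : a < b -> side l a b -> In c l -> In d l -> c < d ->
  ~ crossing a b c d /\ ~ crossing c d a b.
Proof. intros; polygon_lia. Qed.

Lemma side_cut_ear l x u v : In x l -> neighbour l x u -> neighbour l x v -> u < v ->
  side (cut x l) u v.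
Proof.
  intros; unfold side.
  destruct (classic (u < x < v)); [left | right]; intros z Hz;
    apply in_remove in Hz as [Hz Hzx]; polygon_lia.
Qed.

Lemma not_side l a b : ~ side l a b ->
  (exists z, In z l /\ a < z < b) /\ (exists z, In z l /\ ~ a <= z <= b).
Proof.
  unfold side; intro H; split; apply NNPP; intro C; apply H;
    [left | right]; intros z Hz; [intro | apply NNPP; intro]; apply C; eauto.
Qed.

Lemma side_cut l x a b : side (cut x l) a b ->
  (forall z, In z l -> z <> x -> ~ a < z < b) \/ (forall z, In z l -> z <> x -> a <= z <= b).
Proof.
  intros [H|H]; [left|right]; intros z Hz Hzx; apply H, in_in_remove; auto.
Qed.

Lemma new_side_neighbours l x a b : In x l -> In a l -> In b l -> a <> x -> b <> x ->
  a < b -> side (cut x l) a b -> ~ side l a b -> neighbour l x a /\ neighbour l x b.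
Proof.
  intros Hx Ha Hb Hax Hbx Hab Hcut Hl.
  apply not_side in Hl as [[z1 [Hz1 Hz1']] [z2 [Hz2 Hz2']]].
  unfold neighbour, adjacent, side.
  destruct (side_cut _ _ _ _ Hcut) as [H|H].
  - assert (z1 = x) as -> by (apply NNPP; intro; apply (H z1); auto).
    split; (split; [assumption|]); [right | left]; split; try lia; left; intros z Hz;
      (destruct (Nat.eq_dec z x); [lia | specialize (H z Hz ltac:(assumption)); lia]).
  - (* [x] is the only vertex outside [a, b]; if [x < a] then [x]-[a] is an inner side
       and [x]-[b] the wrap-around side, and symmetrically if [b < x]. *)
    assert (z2 = x) as -> by (apply NNPP; intro; apply Hz2', H; auto).
    destruct (Nat.lt_ge_cases x a);
      split; (split; [assumption|]); [left | left | right | right]; split; try lia;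
      [left | right | right | left]; intros z Hz;
      destruct (Nat.eq_dec z x); try lia; specialize (H z Hz ltac:(assumption)); lia.
Qed.

Lemma new_side_cut l x u v a b : In x l -> neighbour l x u -> neighbour l x v -> u < v ->
  a < b -> In a l -> In b l -> a <> x -> b <> x ->
  side (cut x l) a b -> ~ side l a b -> a = u /\ b = v.
Proof.
  intros Hx Hu Hv Huv Hab Ha Hb Hax Hbx Hcut Hl.
  destruct (new_side_neighbours l x a b) as [Na Nb]; auto.
  pose proof (neighbour_at_most_two l x u v a Hx Hu Hv Na).
  pose proof (neighbour_at_most_two l x u v b Hx Hu Hv Nb); lia.
Qed.

Lemma neighbour_cut l x y z : neighbour l y z -> z <> x -> neighbour (cut x l) y z.
Proof.
  intros [Hz Ha] Hzx; split; [now apply in_in_remove|].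
  destruct Ha as [[? Hs]|[? Hs]]; [left|right]; split; auto;
    eapply side_incl; eauto; intros w Hw; now apply in_remove in Hw.
Qed.

Lemma neighbour_cut_ear l x u v : In x l -> neighbour l x u -> neighbour l x v -> u <> v ->
  neighbour (cut x l) u v.
Proof.
  intros Hx Hu Hv Huv.
  assert (u <> x /\ v <> x) as [Hux Hvx]
    by (split; apply not_eq_sym; eapply neighbour_neq; eauto).
  split; [apply in_in_remove; auto; apply Hv|].
  destruct (Nat.lt_gt_cases u v) as [[Hlt|Hlt] _]; auto;
    [left | right]; split; auto; apply side_cut_ear; auto.
Qed.

Lemma chord_at_ear_crossing l y u v a b : In y l -> neighbour l y u -> neighbour l y v ->
  u < v -> chord l a b -> a = y \/ b = y -> crossing a b u v.
Proof.
  intros Hy Hu Hv Huv [Hab [Ha [Hb Hs]]] Hy_ab.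
  apply not_side in Hs as [[z1 [? ?]] [z2 [? ?]]]; polygon_lia.
Qed.

Lemma list_extremum (R : nat -> nat -> Prop) (P : nat -> Prop) (l : list nat) :
  (forall a b, R a b \/ R b a) -> (forall a b c, R a b -> R b c -> R a c) ->
  (exists z, In z l /\ P z) -> exists z, In z l /\ P z /\ forall y, In y l -> P y -> R z y.
Proof.
  intros Htot Htr; induction l as [|a l IH]; intros [z [Hz Pz]]; [destruct Hz|].
  assert (Hrefl : forall y, R y y) by (intro y; now destruct (Htot y y)).
  destruct (classic (exists z, In z l /\ P z)) as [E|E].
  - destruct (IH E) as [w [Hw [Pw Hw']]].
    destruct (classic (P a)) as [Pa|Pa]; [destruct (Htot a w) as [Haw|Hwa]|].
    + exists a; repeat split; [now left | auto |]; intros y [<-|Hy] Py; eauto.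
    + exists w; repeat split; [now right | auto |]; intros y [<-|Hy] Py; auto.
    + exists w; repeat split; [now right | auto |]; intros y [<-|Hy] Py; [contradiction | auto].
  - destruct Hz as [<-|Hz]; [|exfalso; eauto].
    exists a; repeat split; [now left | auto |]; intros y [<-|Hy] Py; [auto | exfalso; eauto].
Qed.

Lemma list_min_such (P : nat -> Prop) l : (exists z, In z l /\ P z) ->
  exists z, In z l /\ P z /\ forall y, In y l -> P y -> z <= y.
Proof. apply list_extremum; lia. Qed.

Lemma list_max_such (P : nat -> Prop) l : (exists z, In z l /\ P z) ->
  exists z, In z l /\ P z /\ forall y, In y l -> P y -> y <= z.
Proof. apply (list_extremum ge); lia. Qed.

Lemma neighbour_above l v : In v l -> (exists z, In z l /\ z <> v) ->
  exists s, neighbour l v s /\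
    ((v < s /\ forall z, In z l -> v < z -> s <= z) \/
     (s < v /\ forall z, In z l -> s <= z <= v)).
Proof.
  intros Hv Hz; unfold neighbour, adjacent, side.
  destruct (classic (exists z, In z l /\ v < z)) as [Hup|Hup].
  - destruct (list_min_such _ _ Hup) as [s [Hs [Hvs Hmin]]].
    exists s; split; [split; [exact Hs|] | now left].
    left; split; [exact Hvs|]; left; intros z Hz' ?; specialize (Hmin z Hz'); lia.
  - assert (Hdown : forall z, In z l -> z <= v)
      by (intros z Hz'; apply Nat.nlt_ge; intro; apply Hup; eauto).
    destruct Hz as [w [Hw Hwv]].
    destruct (list_min_such (fun _ => True) l) as [s [Hs [_ Hmin]]]; [eauto|].
    assert (s < v) by (specialize (Hmin w Hw I); specialize (Hdown w Hw); lia).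
    exists s; split; [split; [exact Hs|] | right]; [right; split; [lia|]; right|split; [lia|]];
      intros z Hz'; specialize (Hmin z Hz' I); specialize (Hdown z Hz'); lia.
Qed.

Lemma neighbour_below l v : In v l -> (exists z, In z l /\ z <> v) ->
  exists p, neighbour l v p /\
    ((p < v /\ forall z, In z l -> z < v -> z <= p) \/
     (v < p /\ forall z, In z l -> v <= z <= p)).
Proof.
  intros Hv Hz; unfold neighbour, adjacent, side.
  destruct (classic (exists z, In z l /\ z < v)) as [Hdn|Hdn].
  - destruct (list_max_such _ _ Hdn) as [p [Hp [Hpv Hmax]]].
    exists p; split; [split; [exact Hp|] | now left].
    right; split; [exact Hpv|]; left; intros z Hz' ?; specialize (Hmax z Hz'); lia.
  - assert (Hup : forall z, In z l -> v <= z)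
      by (intros z Hz'; apply Nat.nlt_ge; intro; apply Hdn; eauto).
    destruct Hz as [w [Hw Hwv]].
    destruct (list_max_such (fun _ => True) l) as [p [Hp [_ Hmax]]]; [eauto|].
    assert (v < p) by (specialize (Hmax w Hw I); specialize (Hup w Hw); lia).
    exists p; split; [split; [exact Hp|] | right]; [left; split; [lia|]; right|split; [lia|]];
      intros z Hz'; specialize (Hmax z Hz' I); specialize (Hup z Hz'); lia.
Qed.

Lemma third_vertex (l : list nat) (v a : nat) : NoDup l -> 3 <= length l ->
  exists z, In z l /\ z <> v /\ z <> a.
Proof.
  intros Hl Hlen; apply NNPP; intro C.
  assert (length l <= length [v; a]); [|simpl in *; lia].
  apply NoDup_incl_length; [exact Hl|]; intros z Hz; simpl.
  apply NNPP; intro D; apply C; exists z; repeat split; auto; intros ->; tauto.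
Qed.

Lemma two_neighbours l v : NoDup l -> In v l -> 3 <= length l ->
  exists u w, u <> w /\ neighbour l v u /\ neighbour l v w.
Proof.
  intros Hl Hv Hlen.
  assert (Hother : exists z, In z l /\ z <> v)
    by (destruct (third_vertex l v v Hl Hlen) as [z [? [? _]]]; eauto).
  destruct (neighbour_above l v Hv Hother) as [s [Hs Hs']].
  destruct (neighbour_below l v Hv Hother) as [p [Hp Hp']].
  destruct (third_vertex l v s Hl Hlen) as [z [Hz [Hzv Hzs]]].
  exists s, p; split; [intros <- | auto].
  destruct Hs' as [[? H1]|[? H1]], Hp' as [[? H2]|[? H2]];
    specialize (H1 z Hz); specialize (H2 z Hz); lia.
Qed.

Lemma NoDup_cut x l : NoDup l -> NoDup (cut x l).
Proof.
  induction 1 as [|a l Ha Hl IH]; simpl; [constructor|].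
  destruct (Nat.eq_dec x a); [exact IH|].
  constructor; [|exact IH]; intro H; now apply in_remove in H.
Qed.

Lemma no_chord_small l a b : NoDup l -> length l <= 3 -> ~ chord l a b.
Proof.
  intros Hl Hlen [Hab [Ha [Hb Hs]]].
  apply not_side in Hs as [[z [Hz Hz']] [y [Hy Hy']]].
  assert (length [a; b; z; y] <= length l); [|simpl in *; lia].
  apply NoDup_incl_length.
  - repeat constructor; simpl; lia.
  - intros t Ht; simpl in Ht; intuition congruence.
Qed.

Lemma chord_cut l x a b : chord (cut x l) a b -> chord l a b.
Proof.
  intros [Hab [Ha [Hb Hs]]]; apply in_remove in Ha as [Ha _], Hb as [Hb _].
  repeat split; auto; intro; apply Hs; eapply side_incl; eauto.
  intros z Hz; now apply in_remove in Hz.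
Qed.

Lemma triangulates_cut_ear l y u v T : NoDup l -> 4 <= length l -> In y l ->
  neighbour l y u -> neighbour l y v -> u < v -> triangulates (cut y l) T ->
  triangulates l (fun a b => T a b \/ (a = u /\ b = v)).
Proof.
  intros Hl Hlen Hy Hu Hv Huv [Hchord [Hcross Hmax]].
  assert (Huv_side : side (cut y l) u v) by (apply side_cut_ear; auto).
  assert (Huy : u <> y) by (apply not_eq_sym; eapply neighbour_neq; eauto).
  assert (Hvy : v <> y) by (apply not_eq_sym; eapply neighbour_neq; eauto).
  assert (Hul : In u l) by apply Hu.
  assert (Hvl : In v l) by apply Hv.
  split; [|split].
  - intros a b [Ht|[-> ->]]; [now apply chord_cut with y, Hchord|].
    repeat split; auto; intro Hs.
    enough (length l <= 3) by lia.
    apply (triangle_length l y u v); auto; [lia | now left].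
  - intros a b c d [Ht|[-> ->]] [Ht'|[-> ->]]; auto.
    + destruct (Hchord a b Ht) as [? [? [? _]]]; now apply (side_noncrossing (cut y l) u v a b).
    + destruct (Hchord c d Ht') as [? [? [? _]]]; now apply (side_noncrossing (cut y l) u v c d).
    + unfold crossing; lia.
  - intros a b Hc Hnc.
    destruct (classic (a = y \/ b = y)) as [Hy_ab|Hy_ab].
    { exfalso; apply (Hnc u v); [now right | now apply (chord_at_ear_crossing l y)]. }
    assert (a <> y /\ b <> y) as [Hay Hby] by tauto.
    destruct Hc as [Hab [Ha [Hb Hs]]], (classic (side (cut y l) a b)) as [Hs'|Hs'].
    + right; now apply (new_side_cut l y u v a b).
    + left; apply Hmax; [repeat split; auto; now apply in_in_remove|].
      intros c d Hcd; apply Hnc; now left.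
Qed.

Section ProperColouring.

Variable S : nat -> nat -> Prop. (* "has the same colour as" *)
Hypothesis S_refl : forall a, S a a.
Hypothesis S_sym : forall a b, S a b -> S b a.
Hypothesis S_trans : forall a b c, S a b -> S b c -> S a c.

Definition proper (l : list nat) : Prop := forall a b, In a l -> neighbour l a b -> ~ S a b.

Definition ear (l : list nat) (x : nat) : Prop :=
  In x l /\ exists u v, neighbour l x u /\ neighbour l x v /\ ~ S u v.

Lemma proper_cut_ear l x u v : proper l -> In x l ->
  neighbour l x u -> neighbour l x v -> u < v -> ~ S u v -> proper (cut x l).
Proof.
  intros Hp Hx Hu Hv Huv HS a b Ha [Hb Hab].
  apply in_remove in Ha as [Ha Hax], Hb as [Hb Hbx].
  destruct Hab as [[Hab Hs]|[Hab Hs]];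
    [ destruct (classic (side l a b)) | destruct (classic (side l b a)) ].
  - apply Hp; [|split]; auto; now left.
  - now destruct (new_side_cut l x u v a b) as [-> ->].
  - apply Hp; [|split]; auto; now right.
  - destruct (new_side_cut l x u v b a) as [-> ->]; auto.
Qed.

Lemma other_neighbour l v x : NoDup l -> In v l -> 3 <= length l ->
  exists w, neighbour l v w /\ w <> x.
Proof.
  intros Hl Hv Hlen; destruct (two_neighbours l v Hl Hv Hlen) as [w1 [w2 [Hw [H1 H2]]]].
  destruct (Nat.eq_dec w1 x) as [->|]; [exists w2 | exists w1]; auto.
Qed.

(* If cutting the ear [x] leaves no ear, then its neighbour [v] is an ear whose
   removal leaves the ear [w], the next vertex after [v]. *)
Lemma ear_cut_ear l x : NoDup l -> 4 <= length l -> proper l -> ear l x ->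
  exists y, ear l y /\ exists y', ear (cut y l) y'.
Proof.
  intros Hl Hlen Hp [Hx [u [v [Hu [Hv HS]]]]].
  destruct (classic (exists y', ear (cut x l) y')) as [E|NE].
  { exists x; split; [split; eauto | exact E]. }
  assert (Huv : u <> v) by (intros ->; auto).
  assert (Hul : In u l) by apply Hu.
  assert (Hvl : In v l) by apply Hv.
  assert (Hxu : x <> u) by (eapply neighbour_neq; eauto).
  assert (Hxv : x <> v) by (eapply neighbour_neq; eauto).
  destruct (other_neighbour l v x) as [w [Hw Hwx]]; auto; try lia.
  assert (Hwl : In w l) by apply Hw.
  assert (Hvw : v <> w) by (eapply neighbour_neq; eauto).
  assert (Hwu : w <> u).
  { intros ->; enough (length l <= 3) by lia.
    apply (triangle_length l x u v); auto; apply neighbour_sym in Hw; auto; apply Hw. }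
  assert (Suw : S u w).
  { apply NNPP; intro C; apply NE; exists v; split; [apply in_in_remove; auto|].
    exists u, w; split; [|split; [apply neighbour_cut|]]; auto.
    apply neighbour_sym; [apply in_in_remove; auto | now apply neighbour_cut_ear]. }
  exists v; split.
  { split; auto; exists x, w; split; [now apply neighbour_sym | split; auto].
    intro Sxw; apply (Hp x u Hx Hu); eauto. }
  destruct (other_neighbour l w v) as [z [Hz Hzv]]; auto; try lia.
  assert (Hzx : z <> x).
  { intros ->; apply neighbour_sym in Hz; auto.
    destruct (neighbour_at_most_two l x u v w) as [|[|]]; auto; congruence. }
  assert (Svz : S v z).
  { apply NNPP; intro C; apply NE; exists w; split; [apply in_in_remove; auto|].
    exists v, z; split; [|split]; try apply neighbour_cut; auto; now apply neighbour_sym. }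
  exists w; split; [apply in_in_remove; auto|]; exists x, z; split; [|split].
  - apply neighbour_sym; [apply in_in_remove; auto | apply neighbour_cut_ear; auto].
    now apply neighbour_sym.
  - apply neighbour_cut; auto.
  - intro Sxz; apply (Hp x v Hx Hv); eauto.
Qed.

Lemma ear_ordered l y : ear l y ->
  exists u v, u < v /\ neighbour l y u /\ neighbour l y v /\ ~ S u v.
Proof.
  intros [_ [u [v [Hu [Hv HS]]]]].
  destruct (Nat.lt_total u v) as [|[->|]].
  - exists u, v; auto.
  - exfalso; apply HS, S_refl.
  - exists v, u; split; [|split; [|split]]; auto; intro; now apply HS, S_sym.
Qed.

Lemma exists_bichromatic_triangulation l : NoDup l -> proper l -> (exists x, ear l x) ->
  exists T, triangulates l T /\ forall a b, T a b -> ~ S a b.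
Proof.
  remember (length l) as n eqn:Hn; revert l Hn.
  induction n as [n IH] using lt_wf_ind; intros l -> Hl Hp [x Hx].
  destruct (le_lt_dec (length l) 3) as [Hsmall|Hbig].
  { exists (fun _ _ => False); split; [|tauto].
    repeat split; try tauto; intros a b Hc; exfalso; now apply (no_chord_small l a b). }
  destruct (ear_cut_ear l x Hl ltac:(lia) Hp Hx) as [y [Hy Hnext]].
  destruct (ear_ordered l y Hy) as [u [v [Huv [Hu [Hv HS]]]]].
  destruct (IH (length (cut y l))) with (l := cut y l) as [T [HT HTS]]; auto.
  - apply remove_length_lt, Hy.
  - now apply NoDup_cut.
  - apply (proper_cut_ear l y u v); auto; apply Hy.
  - exists (fun a b => T a b \/ (a = u /\ b = v)); split.
    + apply (triangulates_cut_ear l y); auto; try lia; apply Hy.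
    + intros a b [Ht|[-> ->]]; auto.
Qed.

End ProperColouring.

(** * The polygon with vertices 1, ..., m *)

Lemma vertex_lt m k : k < m -> vertex m k = S k.
Proof. intro; unfold vertex; now rewrite Nat.mod_small. Qed.

Lemma vertex_in_seq m k : 0 < m -> In (vertex m k) (seq 1 m).
Proof. intro; apply in_seq; unfold vertex; pose proof (Nat.mod_upper_bound k m); lia. Qed.

Lemma vertex_period m : 0 < m -> vertex m m = 1.
Proof. intro; unfold vertex; rewrite Nat.Div0.mod_same; lia. Qed.

Lemma neighbour_seq_vertex m k : 2 <= m -> neighbour (seq 1 m) (vertex m k) (vertex m (S k)).
Proof.
  intro Hm; unfold vertex, neighbour, adjacent, side.
  assert (Hr : k mod m < m) by (apply Nat.mod_upper_bound; lia).
  replace (S k) with (k + 1) by lia.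
  rewrite Nat.Div0.add_mod, (Nat.mod_small 1) by lia.
  destruct (Nat.eq_dec (k mod m + 1) m) as [E|E];
    [rewrite E, Nat.Div0.mod_same | rewrite Nat.mod_small]; try lia;
    (split; [apply in_seq; lia|]).
  - right; split; [lia|]; right; intros z Hz; apply in_seq in Hz; lia.
  - left; split; [lia|]; left; intros; lia.
Qed.

Lemma neighbour_seq_inv m a b : 1 <= m -> In a (seq 1 m) -> neighbour (seq 1 m) a b ->
  exists k, (a = vertex m k /\ b = vertex m (S k)) \/ (b = vertex m k /\ a = vertex m (S k)).
Proof.
  intros Hm Ha [Hb [[Hab [Hs|Hs]]|[Hab [Hs|Hs]]]]; apply in_seq in Ha, Hb.
  - exists (a - 1); left; rewrite !vertex_lt by lia.
    split; [lia|]; destruct (Nat.eq_dec b (S a)) as [|Hne]; [lia|].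
    exfalso; apply (Hs (S a)); [apply in_seq|]; lia.
  - exists (m - 1); right; rewrite vertex_lt, Nat.sub_1_r, Nat.succ_pred, vertex_period by lia.
    pose proof (Hs 1); pose proof (Hs m); rewrite in_seq in *; lia.
  - exists (b - 1); right; rewrite !vertex_lt by lia.
    split; [lia|]; destruct (Nat.eq_dec a (S b)) as [|Hne]; [lia|].
    exfalso; apply (Hs (S b)); [apply in_seq|]; lia.
  - exists (m - 1); left; rewrite vertex_lt, Nat.sub_1_r, Nat.succ_pred, vertex_period by lia.
    pose proof (Hs 1); pose proof (Hs m); rewrite in_seq in *; lia.
Qed.

Lemma chord_seq m i j : chord (seq 1 m) i j <-> diagonal m i j.
Proof.
  unfold chord, diagonal, side; rewrite !in_seq; split.
  - intros [Hij [Hi [Hj Hn]]]; repeat split; try lia.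
    + apply Nat.nlt_ge; intro; apply Hn; left; intros; lia.
    + intros [-> ->]; apply Hn; right; intros z Hz; apply in_seq in Hz; lia.
  - intros [Hi [Hij [Hj [H2 Hn]]]]; repeat split; try lia.
    intros [H|H].
    + apply (H (S i)); [apply in_seq|]; lia.
    + pose proof (H 1); pose proof (H m); rewrite in_seq in *; lia.
Qed.

Lemma triangulation_seq m T : triangulates (seq 1 m) T -> triangulation m T.
Proof.
  intros [Hchord [Hcross Hmax]]; split; [|split]; auto.
  - intros i j Hij; now apply chord_seq, Hchord.
  - intros i j Hd Hnc; now apply Hmax; [apply chord_seq|].
Qed.

Lemma proper_collinear_seq cs : quiddity_cycle cs -> 2 <= length cs ->
  proper (collinear cs) (seq 1 (length cs)).
Proof.
  intros Hq Hm a b Ha Hab.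
  destruct (neighbour_seq_inv (length cs) a b) as [k [[-> ->]|[-> ->]]]; auto; try lia;
    [| intro H; apply collinear_sym in H; revert H];
    rewrite collinear_vertex, cdet_wvec_succ by exact Hq; exact C1_neq_C0.
Qed.

Lemma ear_collinear_seq cs x : quiddity_cycle cs -> 2 <= length cs -> In x cs -> x <> C0 ->
  exists y, ear (collinear cs) (seq 1 (length cs)) y.
Proof.
  intros Hq Hm Hx Hx0.
  destruct (In_nth cs x C0 Hx) as [t [Ht <-]].
  assert (Hc : m11 (Mprod cs (S t) 1) = nth t cs C0).
  { simpl; unfold cper; rewrite Nat.sub_1_r, Nat.pred_succ, Nat.mod_small by exact Ht.
    destruct (nth t cs C0); unfold Cadd, Cmul, Copp, C0, Defs.C1; simpl; f_equal; ring. }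
  rewrite m11_Mprod_cdet, Nat.sub_1_r, Nat.pred_succ, Nat.add_1_r in Hc by lia.
  exists (vertex (length cs) (S t)); split; [apply vertex_in_seq; lia|].
  exists (vertex (length cs) t), (vertex (length cs) (S (S t))); split; [|split].
  - apply neighbour_sym; [apply vertex_in_seq; lia | apply neighbour_seq_vertex; lia].
  - apply neighbour_seq_vertex; lia.
  - rewrite collinear_vertex, Hc by exact Hq; exact Hx0.
Qed.

Theorem theorem5p4 (cs : list Cplx) :
  4 <= length cs ->
  quiddity_cycle cs ->
  (exists x, In x cs /\ x <> C0) ->
  exists T : nat -> nat -> Prop,
    triangulation (length cs) T /\
    (forall i j, T i j -> frieze_entry cs i j <> C0).
Proof.
  intros Hm Hq [x [Hx Hx0]].
  destruct (exists_bichromatic_triangulation (collinear cs) (collinear_refl cs) (collinear_sym cs)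
              (collinear_trans cs) (seq 1 (length cs))) as [T [HT HTS]].
  - apply seq_NoDup.
  - apply proper_collinear_seq; auto; lia.
  - apply (ear_collinear_seq cs x); auto; lia.
  - exists T; split; [now apply triangulation_seq|].
    intros i j Hij; destruct HT as [Hchord _].
    destruct (Hchord i j Hij) as [? [Hi _]]; apply in_seq in Hi.
    rewrite frieze_entry_cdet by lia; now apply HTS.
Qed.
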